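(* Let $k \subseteq K$ be fields and $d \geqslant 1$. If $K$ is closed at level $d$ (over $k$), then $K$ is perfect and solvably closed, i.e. $K$ has no nontrivial finite solvable (in particular, no nontrivial finite Galois extension with solvable Galois group) and no nontrivial purely inseparable extensions.
   Context: For fields $k \subseteq K$ and a finite-dimensional $K$-algebra $A$, $A$ descends to an intermediate field $k \subseteq K_0 \subseteq K$ if there is a $K_0$-algebra $A_0$ with $A \simeq A_0 \otimes_{K_0} K$; $\operatorname{ed}_k(A/K)$ is the minimum of $\operatorname{trdeg}_k(K_0)$ over such $K_0$. For a finite field extension $L/K$, $\operatorname{lev}_k(L/K)$ is the smallest $d \geq 0$ such that there is a tower $K = K_0 \subseteq \dots \subseteq K_m$ of finite field extensions with $\operatorname{ed}_k(K_i/K_{i-1}) \leq d$ for all $i$ and $L$ embedding into $K_m$ over $K$. The level $d$ closure $K^{(d)}$ of $K$ in an algebraic closure $\overline{K}$ is the compositum of all intermediate fields $K \subseteq L \subseteq \overline{K}$ with $[L:K]<\infty$ and $\operatorname{lev}_k(L/K) \leq d$; $K$ is closed at level $d$ if $K = K^{(d)}$. A finite extension $L/K$ is called solvable if $L$ embeds over $K$ into the top of a tower $K=K_0\subseteq\dots\subseteq K_m$ with each $K_i=K_{i-1}(\lambda_i)$, $\lambda_i$ a root of a polynomial $x^{n_i}-a_i$ or $x^{n_i}-x-a_i$ with $a_i\in K_{i-1}$; $K$ is solvably closed if it has no nontrivial solvable extensions. *)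

From HB Require Import structures.
From mathcomp Require Import all_boot all_order all_algebra.
From mathcomp Require Import mpoly.
Set Implicit Arguments. Unset Strict Implicit. Unset Printing Implicit Defensive.
Import GRing.Theory.
Local Open Scope ring_scope.

Section AmbientField.
Variable M : fieldType.

Definition subset_of (A B : M -> Prop) : Prop := forall x, A x -> B x.

Definition is_subfield (S : M -> Prop) : Prop :=
  [/\ S 0, S 1, (forall x y, S x -> S y -> S (x - y)),
      (forall x y, S x -> S y -> S (x * y)) & (forall x, S x -> S x^-1)].

Definition adjoin (S : M -> Prop) (lam : M) : M -> Prop :=
  fun y => forall U, is_subfield U -> subset_of S U -> U lam -> U y.

Definition basis_over (F E : M -> Prop) (n : nat) (b : 'I_n -> M) : Prop :=
  (forall x, E x <-> exists c : 'I_n -> M, (forall i, F (c i)) /\ x = \sum_i c i * b i)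
  /\ (forall c : 'I_n -> M, (forall i, F (c i)) -> \sum_i c i * b i = 0 ->
        forall i, c i = 0).

Definition finite_ext (F E : M -> Prop) : Prop :=
  subset_of F E /\ exists n (b : 'I_n -> M), basis_over F E b.

(* The F-algebra E descends to the intermediate field K0 (K0 <= F <= E):
   there is a K0-algebra A0 with A0 (x)_{K0} F ~ E as F-algebras.  A0 is
   realised by its (isomorphic) image B in E: B is a K0-subalgebra of E
   (B = K0-span of b, 1 in B, B closed under products) and a K0-basis b of
   B is an F-basis of E, i.e. the natural map B (x)_{K0} F -> E is an
   isomorphism. *)
Definition descends_to (F E K0 : M -> Prop) : Prop :=
  exists (B : M -> Prop) (n : nat) (b : 'I_n -> M),
    [/\ basis_over K0 B b, basis_over F E b, B 1
      & forall x y, B x -> B y -> B (x * y)].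

Variable k : fieldType.
Variable iota : k -> M.

Definition contains_k (S : M -> Prop) : Prop := forall c, S (iota c).

Definition alg_indep (m : nat) (x : 'I_m -> M) : Prop :=
  forall p : {mpoly k[m]}, mmap iota x p = 0 -> p = 0.

Definition gen_field (m : nat) (x : 'I_m -> M) : M -> Prop :=
  fun y => forall S, is_subfield S -> contains_k S -> (forall i, S (x i)) -> S y.

Definition algebraic_over (S : M -> Prop) (y : M) : Prop :=
  exists p : {poly M}, [/\ p != 0, forall i, S p`_i & root p y].

Definition trdeg_le (K0 : M -> Prop) (d : nat) : Prop :=
  exists (m : nat) (x : 'I_m -> M),
    [/\ (m <= d)%N, forall i, K0 (x i), alg_indep x
      & forall y, K0 y -> algebraic_over (gen_field x) y].

Definition ed_le (F E : M -> Prop) (d : nat) : Prop :=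
  exists K0 : M -> Prop,
    [/\ is_subfield K0, contains_k K0, subset_of K0 F, trdeg_le K0 d
      & descends_to F E K0].

End AmbientField.

Definition image_of (K A : fieldType) (j : K -> A) : A -> Prop :=
  fun x => exists c, x = j c.

(* lev_k(L/K) <= d : there is a tower K = K_0 <= K_1 <= ... <= K_m of finite
   field extensions (all realised as subfields of the top field M) with
   ed_k(K_i / K_(i-1)) <= d, and L embeds into K_m over K. *)
Definition lev_le (k K A : fieldType) (iotaK : {rmorphism k -> K})
    (j : {rmorphism K -> A}) (L : A -> Prop) (d : nat) : Prop :=
  exists (M : fieldType) (iM : {rmorphism K -> M}) (T : nat -> M -> Prop)
         (m : nat) (phi : A -> M),
  [/\ (forall x, T 0%N x <-> image_of iM x),
      (forall i, (i < m)%N ->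
         [/\ is_subfield (T i.+1), finite_ext (T i) (T i.+1)
           & ed_le (fun c => iM (iotaK c)) (T i) (T i.+1) d]),
      (forall c, phi (j c) = iM c),
      (forall x y, L x -> L y -> phi (x + y) = phi x + phi y /\
                                 phi (x * y) = phi x * phi y)
    & (forall x, L x -> T m (phi x))].

Definition is_algebraic_closure (K Kbar : fieldType) (j : {rmorphism K -> Kbar})
  : Prop :=
  (forall p : {poly Kbar}, (1 < size p)%N -> exists x, root p x) /\
  (forall x : Kbar, exists p : {poly K}, p != 0 /\ root (map_poly j p) x).

Definition level_closure (k K Kbar : fieldType) (iotaK : {rmorphism k -> K})
    (j : {rmorphism K -> Kbar}) (d : nat) : Kbar -> Prop :=
  fun x => forall S : Kbar -> Prop, is_subfield S ->
    (forall L : Kbar -> Prop, is_subfield L -> finite_ext (image_of j) L ->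
        lev_le iotaK j L d -> subset_of L S) -> S x.

Definition closed_at_level (k K Kbar : fieldType) (iotaK : {rmorphism k -> K})
    (j : {rmorphism K -> Kbar}) (d : nat) : Prop :=
  forall x, level_closure iotaK j d x <-> image_of j x.

Definition finite_field_ext (K L : fieldType) (jL : {rmorphism K -> L}) : Prop :=
  exists n (b : 'I_n -> L), basis_over (image_of jL) (fun _ => True) b.

Definition solvable_ext (K L : fieldType) (jL : {rmorphism K -> L}) : Prop :=
  finite_field_ext jL /\
  exists (M : fieldType) (iM : {rmorphism K -> M}) (T : nat -> M -> Prop)
         (m : nat) (lam a : nat -> M) (n : nat -> nat),
  [/\ (forall x, T 0%N x <-> image_of iM x),
      (forall i, (i < m)%N ->
         [/\ T i (a i),
             (let p := 'X^(n i) - (a i)%:P in p != 0 /\ root p (lam i)) \/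
             (let p := 'X^(n i) - 'X - (a i)%:P in p != 0 /\ root p (lam i))
           & forall x, T i.+1 x <-> adjoin (T i) (lam i) x])
    & exists phi : {rmorphism L -> M},
        (forall c, phi (jL c) = iM c) /\ (forall y, T m (phi y))].

Definition solvably_closed (K : fieldType) : Prop :=
  forall (L : fieldType) (jL : {rmorphism K -> L}),
    solvable_ext jL -> forall y : L, image_of jL y.

Definition perfect (K : fieldType) : Prop :=
  forall p : nat, p \in [pchar K] -> forall x : K, exists y : K, y ^+ p = x.

(* Let [mu] in [Kbar] be a root of [x^n - a] or [x^n - x - a] with [a] in [K].
   All roots of such a polynomial are algebraic over [k(a)], hence so are the
   coefficients of the minimal polynomial [f] of [mu] over [K]: they lie in the
   subfield [K0] of elements of [K] algebraic over [k(a)], whose transcendence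
   degree over [k] is at most [1 <= d].  The power basis of [K0(mu)] over [K0]
   is one of [K(mu)] over [K], so [K(mu)/K] descends to [K0] and has level at
   most [d]; since [K] is closed at level [d], [mu] lies in [K].  Hence these
   polynomials split over [K], which makes [K] perfect and collapses every
   tower of radical and Artin-Schreier-type extensions of [K]. *)

From HB Require Import structures.
From mathcomp Require Import all_boot all_order all_algebra.
From mathcomp Require Import ring mpoly.
From Stdlib Require Import Classical.
Set Implicit Arguments. Unset Strict Implicit. Unset Printing Implicit Defensive.
Import GRing.Theory.
Local Open Scope ring_scope.

Section Subfield.
Variables (M : fieldType) (S : M -> Prop).
Hypothesis S_subfield : is_subfield S.

Lemma subfield0 : S 0. Proof. by case: S_subfield. Qed.
Lemma subfield1 : S 1. Proof. by case: S_subfield. Qed.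

Lemma subfieldB x y : S x -> S y -> S (x - y).
Proof. by case: S_subfield => _ _ + _ _; apply. Qed.

Lemma subfieldM x y : S x -> S y -> S (x * y).
Proof. by case: S_subfield => _ _ _ + _; apply. Qed.

Lemma subfieldV x : S x -> S x^-1.
Proof. by case: S_subfield => _ _ _ _; apply. Qed.

Lemma subfieldD x y : S x -> S y -> S (x + y).
Proof.
by move=> Sx Sy; have := subfieldB Sx (subfieldB subfield0 Sy); rewrite sub0r opprK.
Qed.

Lemma subfield_sum (I : Type) (r : seq I) (P : pred I) (F : I -> M) :
  (forall i, P i -> S (F i)) -> S (\sum_(i <- r | P i) F i).
Proof. by move=> SF; apply: big_ind => //; [exact: subfield0 | exact: subfieldD]. Qed.

Lemma subfield_nat n : S n%:R.
Proof.
elim: n => [|n IHn]; rewrite ?mulrS; first exact: subfield0.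
exact: subfieldD subfield1 _.
Qed.

Lemma subfieldX x n : S x -> S (x ^+ n).
Proof.
by move=> Sx; elim: n => [|n IHn]; rewrite ?exprS; [exact: subfield1 | exact: subfieldM].
Qed.

Lemma subfield_horner (p : {poly M}) x : (forall i, S p`_i) -> S x -> S p.[x].
Proof.
move=> Sp Sx; rewrite horner_coef; apply: subfield_sum => i _.
by apply: subfieldM; [exact: Sp | exact: subfieldX].
Qed.

Lemma subfield_prod_XsubC (s : seq M) : (forall x, x \in s -> S x) ->
  forall i, S (\prod_(x <- s) ('X - x%:P))`_i.
Proof.
elim: s => [|x s IHs] Ss i; first by rewrite big_nil coef1; exact: subfield_nat.
have Ss' y : y \in s -> S y by move=> ys; apply: Ss; rewrite inE ys orbT.
rewrite big_cons mulrBl coefB coefXM coefCM; apply: subfieldB.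
  by case: eqP => _; [exact: subfield0 | exact: IHs].
by apply: subfieldM; [apply: Ss; rewrite inE eqxx | exact: IHs].
Qed.

Lemma adjoin_in_subfield (T : M -> Prop) lam :
  (forall y, T y <-> S y) -> S lam -> forall x, adjoin T lam x <-> S x.
Proof.
move=> TS Slam x; split=> [|Sx U _ TU _]; first by apply=> // y /TS.
by apply/TU/TS.
Qed.

End Subfield.

Lemma subfieldI (M : fieldType) (S T : M -> Prop) :
  is_subfield S -> is_subfield T -> is_subfield (fun x => S x /\ T x).
Proof.
move=> [S0 S1 SB SM SV] [T0 T1 TB TM TV].
by split=> [| | x y [? ?] [? ?] | x y [? ?] [? ?] | x [? ?]]; split; auto.
Qed.

Lemma preim_subfield (A B : fieldType) (g : {rmorphism A -> B}) (S : B -> Prop) :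
  is_subfield S -> is_subfield (fun x => S (g x)).
Proof.
move=> [S0 S1 SB SM SV].
split=> [| | x y | x y | x]; rewrite ?rmorph0 ?rmorph1 ?rmorphB ?rmorphM ?fmorphV; auto.
Qed.

Lemma image_subfield (A B : fieldType) (g : {rmorphism A -> B}) :
  is_subfield (image_of g).
Proof.
split=> [| | _ _ [x ->] [y ->] | _ _ [x ->] [y ->] | _ [x ->]].
- by exists 0; rewrite rmorph0.
- by exists 1; rewrite rmorph1.
- by exists (x - y); rewrite rmorphB.
- by exists (x * y); rewrite rmorphM.
- by exists x^-1; rewrite fmorphV.
Qed.

Lemma algebraic_subfield (F E : fieldType) (h : {rmorphism F -> E}) :
  is_subfield (algebraicOver h).
Proof.
split; [exact: algebraic0 | exact: algebraic1 | exact: algebraic_sub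
       | exact: algebraic_mul | exact: algebraic_inv].
Qed.

Lemma map_poly_preim (A B : fieldType) (g : {rmorphism A -> B}) (q : {poly B}) :
  (forall i, image_of g q`_i) -> exists q0 : {poly A}, q = map_poly g q0.
Proof.
move=> Sq; have Sq' i : exists c, q`_i == g c by have [c ->] := Sq i; exists c.
exists (\poly_(i < size q) xchoose (Sq' i)); apply/polyP => i.
rewrite coef_map coef_poly; case: ltnP => [_|le_qi].
  by apply/eqP; exact: (xchooseP (Sq' i)).
by rewrite nth_default //; exact/esym/rmorph0.
Qed.

Lemma algebraic_root (F E : fieldType) (h : {rmorphism F -> E}) (p : {poly E}) x :
  p != 0 -> (forall i, algebraicOver h p`_i) -> root p x -> algebraicOver h x.
Proof.
move=> nz_p algp px; apply/integral_algebraic; apply: integral_root nz_p px _.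
by move=> y /(nthP 0) [i _ <-]; apply/integral_algebraic.
Qed.

Lemma algebraic_over_sub (F E : fieldType) (h : {rmorphism F -> E}) (S : E -> Prop) y :
  (forall c, S (h c)) -> algebraicOver h y -> algebraic_over S y.
Proof.
move=> Sh [p nz_p py]; exists (map_poly h p); split=> //; first by rewrite map_poly_eq0.
by move=> i; rewrite coef_map; exact: Sh.
Qed.

Definition poly_span (M : fieldType) (S : M -> Prop) (mu : M) (n : nat) (y : M) :=
  exists q : {poly M}, [/\ (size q <= n)%N, forall i, S q`_i & y = q.[mu]].

Lemma horner_rVpoly (M : fieldType) n (c : 'I_n -> M) x :
  (rVpoly (\row_i c i)).[x] = \sum_i c i * x ^+ i.
Proof.
rewrite (horner_coef_wide _ (size_poly _ _)).
by apply: eq_bigr => i _; rewrite coef_rVpoly_ord mxE.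
Qed.

Section PolySpan.
Variables (M : fieldType) (S : M -> Prop) (mu : M).
Hypothesis S_subfield : is_subfield S.

Lemma poly_spanE n y :
  poly_span S mu n y <->
  exists c : 'I_n -> M, (forall i, S (c i)) /\ y = \sum_i c i * mu ^+ i.
Proof.
split=> [[q [sq Sq ->]] | [c [Sc ->]]].
  by exists (fun i => q`_i); split=> //; exact: horner_coef_wide.
exists (rVpoly (\row_i c i)); split; [exact: size_poly | | by rewrite horner_rVpoly].
move=> i; rewrite coef_rVpoly; case: insub => [i'|]; first by rewrite mxE.
exact: (subfield0 S_subfield).
Qed.

Variable F : {poly M}.
Hypotheses (F_monic : F \is monic) (F_S : forall i, S F`_i) (F_mu : root F mu).
Local Notation r := (size F).-1.
Local Notation span := (poly_span S mu r).

Lemma size_monic_root : size F = r.+1 /\ (0 < r)%N.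
Proof.
have gt1_F : (1 < size F)%N by apply: root_size_gt1 F_mu; exact: monic_neq0.
by rewrite prednK ?(ltnW gt1_F) // -ltnS prednK ?(ltnW gt1_F).
Qed.

Lemma poly_spanC c : S c -> span c.
Proof.
move=> Sc; exists c%:P; split; last by rewrite hornerC.
  by rewrite (leq_trans (size_polyC_leq1 c)) //; case: size_monic_root.
move=> i; rewrite coefC; case: eqP => _; first exact: Sc.
exact: (subfield0 S_subfield).
Qed.

Lemma poly_spanB y z : span y -> span z -> span (y - z).
Proof.
move=> [p [sp Sp ->]] [q [sq Sq ->]]; exists (p - q); split.
- by rewrite (leq_trans (size_polyD _ _)) // size_polyN geq_max sp sq.
- by move=> i; rewrite coefB; apply: (subfieldB S_subfield).
- by rewrite hornerD hornerN.
Qed.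

Lemma poly_spanD y z : span y -> span z -> span (y + z).
Proof.
move=> Sy Sz; have S0 := poly_spanC (subfield0 S_subfield).
by have := poly_spanB Sy (poly_spanB S0 Sz); rewrite sub0r opprK.
Qed.

(* Multiplication by [mu] raises the degree bound by one; subtracting a
   multiple of the monic [F] brings it back. *)
Lemma poly_span_mulX y : span y -> span (y * mu).
Proof.
have [sizeF r_gt0] := size_monic_root.
case=> q [sq Sq ->]; pose c := q`_r.-1.
exists (q * 'X - c *: F); split.
- apply/leq_sizeP => m le_rm; rewrite coefB coefMX coefZ.
  rewrite (gtn_eqF (leq_trans r_gt0 le_rm)).
  move: le_rm; rewrite leq_eqVlt => /predU1P [<- | lt_rm].
    by rewrite -lead_coefE (monicP F_monic) mulr1 subrr.
  have le_Fm : (size F <= m)%N by rewrite sizeF.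
  have m_gt0 : (0 < m)%N := leq_trans r_gt0 (ltnW lt_rm).
  have le_q_m1 : (size q <= m.-1)%N.
    by rewrite -ltnS prednK // (leq_ltn_trans sq lt_rm).
  by rewrite (nth_default 0 le_Fm) (nth_default 0 le_q_m1) mulr0 subrr.
- move=> i; rewrite coefB coefMX coefZ; apply: (subfieldB S_subfield).
    by case: (i == 0)%N; [exact: (subfield0 S_subfield) | exact: Sq].
  exact: (subfieldM S_subfield (Sq _) (F_S _)).
- by rewrite hornerD hornerN hornerZ hornerMX (rootP F_mu) mulr0 subr0.
Qed.

Lemma poly_span_horner (q : {poly M}) : (forall i, S q`_i) -> span q.[mu].
Proof.
elim/poly_ind: q => [|q c IHq] Sq.
  by rewrite horner0; exact/poly_spanC/(subfield0 S_subfield).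
have Sq' i : S q`_i by have := Sq i.+1; rewrite coefD coefMX coefC /= addr0.
have Sc : S c by have := Sq 0%N; rewrite coefD coefMX coefC /= add0r.
rewrite hornerMXaddC; apply: poly_spanD; first exact/poly_span_mulX/IHq.
exact: poly_spanC.
Qed.

Lemma poly_spanM y z : span y -> span z -> span (y * z).
Proof.
move=> [p [_ Sp ->]] [q [_ Sq ->]]; rewrite -hornerM; apply: poly_span_horner => i.
rewrite coefM; apply: (subfield_sum S_subfield) => l _.
exact: (subfieldM S_subfield (Sp _) (Sq _)).
Qed.

End PolySpan.

Section SimpleExtension.
Variables (K E : fieldType) (j : {rmorphism K -> E}) (mu : E).

Definition minpoly_of (f : {poly K}) : Prop :=
  [/\ f \is monic, root (map_poly j f) mu
    & forall q, q != 0 -> root (map_poly j q) mu -> (size f <= size q)%N].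

Lemma minpoly_exists g : g != 0 -> root (map_poly j g) mu -> exists f, minpoly_of f.
Proof.
elim: {g}(size g) {-2}g (leqnn (size g)) => [|n IHn] g le_gn nz_g gmu.
  by move: le_gn; rewrite leqn0 size_poly_eq0 (negPf nz_g).
have [[q [nz_q qmu lt_qg]] | no_smaller] :=
  classic (exists q, [/\ q != 0, root (map_poly j q) mu & (size q < size g)%N]).
  exact: IHn q (leq_trans lt_qg le_gn) nz_q qmu.
exists ((lead_coef g)^-1 *: g); split.
- by rewrite monicE lead_coefZ mulVf ?lead_coef_eq0.
- by rewrite map_polyZ rootZ // fmorph_eq0 invr_eq0 lead_coef_eq0.
- move=> q nz_q qmu; rewrite size_scale ?invr_eq0 ?lead_coef_eq0 // leqNgt.
  by apply/negP => lt_qg; apply: no_smaller; exists q.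
Qed.

Variable f : {poly K}.
Hypothesis f_minpoly : minpoly_of f.

Let f_monic : f \is monic. Proof. by case: f_minpoly. Qed.
Let f_mu : root (map_poly j f) mu. Proof. by case: f_minpoly. Qed.
Let f_least q : q != 0 -> root (map_poly j q) mu -> (size f <= size q)%N.
Proof. by case: f_minpoly => _ _; apply. Qed.

Local Notation F := (map_poly j f).
Local Notation r := (size F).-1.
Local Notation L := (poly_span (image_of j) mu r).

Let Fj := image_subfield j.
Let F_monic : F \is monic. Proof. by rewrite map_monic. Qed.
Let F_image i : image_of j F`_i. Proof. by rewrite coef_map; exists f`_i. Qed.

Lemma minpoly_dvdp q : root (map_poly j q) mu -> f %| q.
Proof.
move=> qmu; apply/modp_eq0P/eqP; apply: contraT => nz_rem.
have := f_least nz_rem; rewrite leqNgt ltn_modp monic_neq0 //=; apply.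
move: qmu; rewrite {1}(divp_eq q f) rmorphD rmorphM /root hornerD hornerM.
by rewrite (rootP f_mu) mulr0 add0r.
Qed.

Lemma simple_ext_horner q : L (map_poly j q).[mu].
Proof.
have q_image i : image_of j (map_poly j q)`_i by rewrite coef_map; exists q`_i.
exact: (poly_span_horner Fj F_monic F_image f_mu q_image).
Qed.

Lemma simple_ext_root : L mu.
Proof. by have := simple_ext_horner 'X; rewrite map_polyX hornerX. Qed.

Lemma simple_ext_sub : subset_of (image_of j) L.
Proof.
by move=> _ [c ->]; have := simple_ext_horner c%:P; rewrite map_polyC hornerC.
Qed.

(* The inverse of [y = q(mu) != 0] comes from a Bezout relation [u f + v q = 1],
   as the minimality of [f] forces [f] and [q] to be coprime. *)
Lemma simple_ext_subfield : is_subfield L.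
Proof.
split=> [| | y z | y z |]; first exact: (poly_spanC Fj F_monic f_mu (subfield0 Fj)).
- exact: (poly_spanC Fj F_monic f_mu (subfield1 Fj)).
- exact: poly_spanB.
- exact: (poly_spanM Fj F_monic F_image f_mu).
move=> _ [q [_ Sq ->]]; have [q0 ->] := map_poly_preim Sq.
have [->|nz_y] := eqVneq (map_poly j q0).[mu] 0.
  by rewrite invr0; exact: (poly_spanC Fj F_monic f_mu (subfield0 Fj)).
have nz_q0 : q0 != 0 by apply: contraNneq nz_y => ->; rewrite rmorph0 horner0.
have coprime_f_q0 : coprimep f q0.
  apply: contraT => /(Bezout_coprimepPn (monic_neq0 f_monic) nz_q0).
  case=> -[u v] /= /andP[_ /andP[v_gt0 lt_vf]] uv_eq.
  have nz_v : v != 0 by rewrite -size_poly_gt0.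
  have := f_least nz_v; rewrite leqNgt lt_vf; apply.
  have := congr1 (fun p => (map_poly j p).[mu]) uv_eq.
  rewrite /= !rmorphM !hornerM (rootP f_mu) mulr0 => /esym/eqP.
  by rewrite mulf_eq0 (negPf nz_y) orbF.
have [[u v] /= uv_eq] := Bezout_eq1_coprimepP _ _ coprime_f_q0.
have := congr1 (fun p => (map_poly j p).[mu]) uv_eq.
rewrite /= rmorphD !rmorphM hornerD !hornerM (rootP f_mu) mulr0 add0r rmorph1 hornerC.
by move=> vy1; rewrite -[_^-1]mul1r -vy1 mulfK //; apply: simple_ext_horner.
Qed.

Lemma simple_ext_free (c : 'I_r -> E) : (forall i, image_of j (c i)) ->
  \sum_i c i * mu ^+ i = 0 -> forall i, c i = 0.
Proof.
move=> Sc sum0 i.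
have Sq m : image_of j (rVpoly (\row_i c i))`_m.
  rewrite coef_rVpoly; case: insub => [i'|]; first by rewrite mxE.
  by exists 0; rewrite rmorph0.
have [q0 Dq] := map_poly_preim Sq.
have q0_0 : q0 = 0.
  apply/eqP; apply: contraT => nz_q0.
  have q0mu : root (map_poly j q0) mu by rewrite /root -Dq horner_rVpoly sum0.
  have le_q0 : (size q0 <= r)%N by rewrite -(size_map_poly j) -Dq size_poly.
  have := leq_trans (f_least nz_q0 q0mu) le_q0.
  by rewrite size_map_poly leqNgt ltn_predL size_poly_gt0 monic_neq0.
by have := coef_rVpoly_ord (\row_i c i) i; rewrite mxE Dq q0_0 map_poly0 coef0.
Qed.

Lemma simple_ext_basis : basis_over (image_of j) L (fun i : 'I_r => mu ^+ i).
Proof. by split; [exact: poly_spanE | exact: simple_ext_free]. Qed.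

Lemma simple_ext_finite : finite_ext (image_of j) L.
Proof.
split; first exact: simple_ext_sub.
by exists r, (fun i => mu ^+ i); exact: simple_ext_basis.
Qed.

Lemma simple_ext_descends (K0 : E -> Prop) : is_subfield K0 ->
  subset_of K0 (image_of j) -> (forall i, K0 F`_i) -> descends_to (image_of j) L K0.
Proof.
move=> K0_subfield K0_sub K0_F.
exists (poly_span K0 mu r), r, (fun i => mu ^+ i); split.
- split; first exact: poly_spanE.
  by move=> c K0c; apply: simple_ext_free => i; apply: K0_sub.
- exact: simple_ext_basis.
- exact: (poly_spanC K0_subfield F_monic f_mu (subfield1 K0_subfield)).
- exact: (poly_spanM K0_subfield F_monic K0_F f_mu).
Qed.

End SimpleExtension.

Section FractionLift.
Local Open Scope quotient_scope.
Variables (R : idomainType) (F : fieldType) (f : {rmorphism R -> F}).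
Hypothesis f_inj : injective f.

Definition frac_lift (x : {fraction R}) : F := f (repr x).1 / f (repr x).2.

Let f_neq0 (r : R) : r != 0 -> f r != 0.
Proof. by apply: contra_neq; rewrite -(rmorph0 f) => /f_inj. Qed.

Lemma frac_lift_pi (z : {ratio R}) : frac_lift (\pi_{fraction R} z) = f z.1 / f z.2.
Proof.
have := FracField.equivf_r z; rewrite /frac_lift; set w := repr _ => eq_zw.
have nz_w2 := f_neq0 (denom_ratioP w); have nz_z2 := f_neq0 (denom_ratioP z).
apply: (canLR (mulfK nz_w2)); rewrite mulrAC; apply: (canRL (mulfK nz_z2)).
by rewrite -!rmorphM mulrC eq_zw mulrC.
Qed.

Lemma frac_lift_tofrac r : frac_lift (tofrac r) = f r.
Proof.
rewrite /tofrac; unlock; rewrite frac_lift_pi /= !numden_Ratio ?oner_neq0 //.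
by rewrite rmorph1 divr1.
Qed.

Lemma frac_lift_is_zmod_morphism : zmod_morphism frac_lift.
Proof.
move=> x y; rewrite -[x]reprK -[y]reprK; move: (repr x) (repr y) => a b.
have -> : \pi_{fraction R} a - \pi_{fraction R} b =
          \pi_{fraction R} (FracField.addf a (FracField.oppf b)).
  by rewrite FracField.pi_add FracField.pi_opp.
rewrite !frac_lift_pi /FracField.addf /FracField.oppf /=.
have nz_a2 := denom_ratioP a; have nz_b2 := denom_ratioP b.
rewrite !numden_Ratio ?mulf_neq0 //= rmorphD !rmorphM rmorphN.
by field; rewrite !f_neq0.
Qed.

Lemma frac_lift_is_monoid_morphism : monoid_morphism frac_lift.
Proof.
split=> [|x y]; first by rewrite -tofrac1 frac_lift_tofrac rmorph1.
rewrite -[x]reprK -[y]reprK; move: (repr x) (repr y) => a b.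
have -> : \pi_{fraction R} a * \pi_{fraction R} b =
          \pi_{fraction R} (FracField.mulf a b) by rewrite FracField.pi_mul.
rewrite !frac_lift_pi /FracField.mulf /=.
have nz_a2 := denom_ratioP a; have nz_b2 := denom_ratioP b.
rewrite !numden_Ratio ?mulf_neq0 //= !rmorphM.
by field; rewrite !f_neq0.
Qed.

HB.instance Definition _ :=
  GRing.isZmodMorphism.Build _ _ frac_lift frac_lift_is_zmod_morphism.
HB.instance Definition _ :=
  GRing.isMonoidMorphism.Build _ _ frac_lift frac_lift_is_monoid_morphism.

Definition frac_lift_rmorphism : {rmorphism {fraction R} -> F} := frac_lift.

End FractionLift.

Lemma alg_indep0 (k M : fieldType) (iota : {rmorphism k -> M}) (x : 'I_0 -> M) :
  alg_indep iota x.
Proof.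
move=> p; rewrite (nvar0_mpolyC p) mmapC => /eqP; rewrite fmorph_eq0 => /eqP ->.
exact: mpolyC0.
Qed.

Lemma alg_indep1 (k M : fieldType) (iota : {rmorphism k -> M}) (x : M) :
  (forall q : {poly k}, (map_poly iota q).[x] = 0 -> q = 0) ->
  alg_indep iota (fun _ : 'I_1 => x).
Proof.
move=> transc p px0.
pose q : {poly k} := \sum_(m <- msupp p) p@_m *: 'X^(m ord0).
have coef_q (m : 'X_{1..1}) : q`_(m ord0) = p@_m.
  rewrite [in RHS](mpolyE p) coef_sum raddf_sum /=; apply: eq_bigr => m' _.
  rewrite coefZ coefXn mcoeffZ mcoeffX; congr (_ * (nat_of_bool _)%:R).
  apply/idP/idP => [/eqP eq_m | /eqP -> //].
  by apply/eqP/mnmP => i; rewrite (ord1 i) eq_m.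
have q0 : q = 0.
  apply: transc; rewrite -[RHS]px0 rmorph_sum horner_sum /=; apply: eq_bigr => m _.
  by rewrite map_polyZ map_polyXn hornerZ hornerXn /mmap1 big_ord1.
by apply/mpolyP => m; rewrite -coef_q q0 coef0 mcoeff0.
Qed.

Lemma split_by_divisor_roots (E : fieldType) (P : E -> Prop) (p : {poly E}) :
  p != 0 -> (forall q, q %| p -> (1 < size q)%N -> exists2 x, P x & root q x) ->
  exists2 s : seq E, (forall x, x \in s -> P x)
                   & p = lead_coef p *: \prod_(x <- s) ('X - x%:P).
Proof.
elim: {p}(size p) {-2}p (leqnn (size p)) => [|n IHn] p le_pn nz_p p_roots.
  by move: le_pn; rewrite leqn0 size_poly_eq0 (negPf nz_p).
have [le_p1|gt_p1] := leqP (size p) 1.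
  have size_p1 : size p = 1 by apply/eqP; rewrite eqn_leq le_p1 size_poly_gt0.
  exists [::] => //; rewrite big_nil alg_polyC /lead_coef size_p1.
  exact: size1_polyC le_p1.
have [x Px /factor_theorem [q Dp]] := p_roots p (dvdpp p) gt_p1.
have nz_q : q != 0 by apply: contraNneq nz_p => q0; rewrite Dp q0 mul0r.
have le_qn : (size q <= n)%N.
  by move: le_pn; rewrite Dp size_Mmonic ?monicXsubC // size_XsubC addn2.
have [|s Ps Dq] := IHn q le_qn nz_q.
  by move=> r r_q; apply: p_roots; rewrite (dvdp_trans r_q) // Dp dvdp_mulr.
exists (x :: s); first by move=> y; rewrite inE => /predU1P [->|/Ps].
rewrite big_cons Dp lead_coefM lead_coefXsubC mulr1 {1}Dq -scalerAl.
by rewrite mulrC.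
Qed.

Definition over_prime_adjoin (K : fieldType) (a : K) (g : {poly K}) : Prop :=
  forall U, is_subfield U -> U a -> forall i, U g`_i.

Lemma over_prime_adjoin_XnsubC (K : fieldType) n (a : K) :
  over_prime_adjoin a ('X^n - a%:P).
Proof.
move=> U U_subfield Ua i; rewrite coefB coefXn coefC.
apply: (subfieldB U_subfield); first exact: subfield_nat.
by case: (i == 0)%N; [exact: Ua | exact: subfield0].
Qed.
Arguments over_prime_adjoin_XnsubC {K} n a.

Lemma over_prime_adjoin_XnsubXsubC (K : fieldType) n (a : K) :
  over_prime_adjoin a ('X^n - 'X - a%:P).
Proof.
move=> U U_subfield Ua i; rewrite !coefB coefXn coefX coefC.
apply: (subfieldB U_subfield).
  by apply: (subfieldB U_subfield); exact: subfield_nat.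
by case: (i == 0)%N; [exact: Ua | exact: subfield0].
Qed.
Arguments over_prime_adjoin_XnsubXsubC {K} n a.

Section LevelClosed.
Variables (k K Kbar : fieldType) (iotaK : {rmorphism k -> K}).
Variables (j : {rmorphism K -> Kbar}) (d : nat).

Let iota : {rmorphism k -> Kbar} := j \o iotaK.

Lemma simple_ext_lev mu f (K0 : Kbar -> Prop) : minpoly_of j mu f ->
  is_subfield K0 -> contains_k iota K0 -> subset_of K0 (image_of j) ->
  trdeg_le iota K0 d -> (forall i, K0 (map_poly j f)`_i) ->
  lev_le iotaK j (poly_span (image_of j) mu (size (map_poly j f)).-1) d.
Proof.
move=> f_min K0_subfield K0_k K0_sub K0_trdeg K0_f.
set L := poly_span _ _ _.
exists Kbar, j, (fun i => if i is 0 then image_of j else L), 1%N, id.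
split=> //; case=> // _.
split; [exact: simple_ext_subfield | exact: simple_ext_finite |].
by exists K0; split=> //; exact: simple_ext_descends.
Qed.

Definition alg_part (F0 : fieldType) (h : {rmorphism F0 -> Kbar}) : Kbar -> Prop :=
  fun y => image_of j y /\ algebraicOver h y.

Hypothesis d_gt0 : (0 < d)%N.
Hypothesis Kbar_closure : is_algebraic_closure j.
Hypothesis K_closed : closed_at_level iotaK j d.

Lemma closed_minpoly_root mu f (K0 : Kbar -> Prop) : minpoly_of j mu f ->
  is_subfield K0 -> contains_k iota K0 -> subset_of K0 (image_of j) ->
  trdeg_le iota K0 d -> (forall i, K0 (map_poly j f)`_i) -> image_of j mu.
Proof.
move=> f_min K0_subfield K0_k K0_sub K0_trdeg K0_f.
apply/K_closed => S _ S_max; apply: S_max (simple_ext_root f_min).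
- exact: simple_ext_subfield.
- exact: simple_ext_finite.
- exact: simple_ext_lev K0_subfield K0_k K0_sub K0_trdeg K0_f.
Qed.

(* The roots of the minimal polynomial [f] of [mu] are roots of [g], hence
   algebraic over [F0]; so are the coefficients of [f], which therefore lie
   in [alg_part h]. *)
Lemma closed_root_of_algebraic_coefs (F0 : fieldType) (h : {rmorphism F0 -> Kbar}) :
  (forall c, algebraicOver h (iota c)) -> trdeg_le iota (alg_part h) d ->
  forall (g : {poly K}) mu, g != 0 -> (forall i, algebraicOver h (j g`_i)) ->
  root (map_poly j g) mu -> image_of j mu.
Proof.
move=> k_alg trdeg_h g mu nz_g g_alg gmu.
have [f f_min] := minpoly_exists nz_g gmu; have [f_monic _ _] := f_min.
have alg_part_subfield := subfieldI (image_subfield j) (algebraic_subfield h).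
apply: (closed_minpoly_root f_min alg_part_subfield) => //.
- by move=> c; split; [exists (iotaK c) | exact: k_alg].
- by move=> y [].
move=> i; split; first by rewrite coef_map; exists f`_i.
have nz_jf : map_poly j f != 0 by rewrite map_poly_eq0 monic_neq0.
have jf_jg : map_poly j f %| map_poly j g by rewrite dvdp_map (minpoly_dvdp f_min).
have [|s s_roots ->] :=
  split_by_divisor_roots (P := fun x => root (map_poly j g) x) nz_jf.
  move=> q q_jf gt_q1; have [x qx] := Kbar_closure.1 q gt_q1.
  by exists x => //; apply: root_dvdp qx; exact: dvdp_trans jf_jg.
rewrite lead_coef_map (monicP f_monic) rmorph1 scale1r.
apply: (subfield_prod_XsubC (algebraic_subfield h)) => x /s_roots x_root.
apply: algebraic_root x_root; first by rewrite map_poly_eq0.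
by move=> l; rewrite coef_map; exact: g_alg.
Qed.

(* [F0] is [k] if [a] is algebraic over [k], and [k(t)] with [t] sent to [a]
   otherwise; [alg_part h] then has transcendence degree [0] resp. [1]. *)
Lemma small_base_field (a : K) :
  exists (F0 : fieldType) (h : {rmorphism F0 -> Kbar}),
    [/\ forall c, algebraicOver h (iota c), algebraicOver h (j a)
      & trdeg_le iota (alg_part h) d].
Proof.
have [a_alg | a_transc] := classic (algebraicOver iota (j a)).
  exists k, iota; split=> //; first exact: algebraic_id.
  exists 0%N, (fun _ => 0); split=> //; [by case | exact: alg_indep0 |].
  by move=> y [_ y_alg]; apply: algebraic_over_sub y_alg => c S _ Sk _; exact: Sk.
pose ev : {rmorphism {poly k} -> Kbar} := horner_eval (j a) \o map_poly iota.
have evE q : ev q = (map_poly iota q).[j a] by rewrite /= horner_evalE.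
have ev_inj : injective ev.
  move=> q1 q2 eq_ev; apply/eqP; rewrite -subr_eq0; apply: contraT => nz_q.
  case: a_transc; exists (q1 - q2) => //.
  by rewrite /root -evE rmorphB eq_ev subrr.
pose h := frac_lift_rmorphism ev_inj.
have hE q : h (tofrac q) = (map_poly iota q).[j a].
  by rewrite -evE; exact: frac_lift_tofrac.
have ja_alg : algebraicOver h (j a).
  by have := algebraic_id h (tofrac 'X); rewrite hE map_polyX hornerX.
exists {fraction {poly k}}, h; split=> //.
  by move=> c; have := algebraic_id h (tofrac c%:P); rewrite hE map_polyC hornerC.
exists 1%N, (fun _ => j a); split=> //.
- by move=> _; split; [exists a | exact: ja_alg].
- by apply: alg_indep1 => q q_ja; apply: (ev_inj); rewrite evE q_ja rmorph0.
move=> y [_ y_alg]; apply: algebraic_over_sub y_alg => x S S_subfield Sk Sa.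
have S_ev q : S (ev q).
  rewrite evE; apply: (subfield_horner S_subfield) => [i|]; last exact: Sa ord0.
  by rewrite coef_map; exact: Sk.
by apply: (subfieldM S_subfield) => //; apply: (subfieldV S_subfield).
Qed.

Lemma closed_root_over_prime_adjoin a (g : {poly K}) mu :
  g != 0 -> over_prime_adjoin a g -> root (map_poly j g) mu -> image_of j mu.
Proof.
move=> nz_g g_adj gmu; have [F0 [h [k_alg a_alg trdeg_h]]] := small_base_field a.
apply: (closed_root_of_algebraic_coefs k_alg trdeg_h nz_g _ gmu) => i.
exact: (g_adj _ (preim_subfield j (algebraic_subfield h)) a_alg).
Qed.

Lemma split_over_prime_adjoin a (g : {poly K}) :
  g != 0 -> over_prime_adjoin a g ->
  exists s : seq K, g = lead_coef g *: \prod_(x <- s) ('X - x%:P).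
Proof.
move=> nz_g g_adj; have [|s _ gE] := split_by_divisor_roots (P := fun _ => True) nz_g.
  move=> q q_g gt_q1; have [x qx] : exists x, root (map_poly j q) x.
    by apply: Kbar_closure.1; rewrite size_map_poly.
  have [y xE] : image_of j x.
    apply: closed_root_over_prime_adjoin nz_g g_adj _.
    by apply: root_dvdp qx; rewrite dvdp_map.
  by exists y => //; move: qx; rewrite xE /root horner_map fmorph_eq0.
by exists s.
Qed.

Lemma root_image_over_prime_adjoin (M : fieldType) (iM : {rmorphism K -> M})
    a (g : {poly K}) lam :
  over_prime_adjoin a g -> map_poly iM g != 0 -> root (map_poly iM g) lam ->
  image_of iM lam.
Proof.
rewrite map_poly_eq0 => g_adj nz_g; have [s ->] := split_over_prime_adjoin nz_g g_adj.
rewrite map_polyZ rootZ ?fmorph_eq0 ?lead_coef_eq0 // rmorph_prod.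
rewrite (eq_bigr (fun x => 'X - (iM x)%:P)) => [|x _]; last exact: map_polyXsubC.
rewrite -(big_map iM xpredT (fun y => 'X - y%:P)) root_prod_XsubC.
by case/mapP=> x _ ->; exists x.
Qed.

Lemma level_closed_perfect : perfect K.
Proof.
move=> p char_p x; have p_gt0 := prime_gt0 (pcharf_prime char_p).
have nz_g : 'X^p - x%:P != 0 by rewrite -size_poly_gt0 size_XnsubC.
have [mu gmu] : exists mu, root (map_poly j ('X^p - x%:P)) mu.
  by apply: Kbar_closure.1; rewrite size_map_poly size_XnsubC.
have [y muE] := closed_root_over_prime_adjoin nz_g (over_prime_adjoin_XnsubC p x) gmu.
exists y; move: gmu; rewrite muE /root horner_map fmorph_eq0.
by rewrite hornerD hornerN hornerXn hornerC subr_eq0 => /eqP.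
Qed.

Lemma level_closed_solvably_closed : solvably_closed K.
Proof.
move=> L jL [_ [M [iM [T [m [lam [a [n [T0 T_step [phi [phi_j T_phi]]]]]]]]]]] y.
have T_image i : (i <= m)%N -> forall x, T i x <-> image_of iM x.
  elim: i => [|i IHi] le_im; first exact: T0.
  have [Ta root_lam T_adj] := T_step i le_im; have {}IHi := IHi (ltnW le_im).
  have [a' a'E] := (IHi _).1 Ta.
  have lam_image : image_of iM (lam i).
    case: root_lam => /= -[nz_p p_lam].
      have gE : map_poly iM ('X^(n i) - a'%:P) = 'X^(n i) - (a i)%:P.
        by rewrite rmorphB /= map_polyXn map_polyC a'E.
      by apply: (root_image_over_prime_adjoin (over_prime_adjoin_XnsubC (n i) a'));
        rewrite gE.
    have gE : map_poly iM ('X^(n i) - 'X - a'%:P) = 'X^(n i) - 'X - (a i)%:P.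
      by rewrite !rmorphB /= map_polyXn map_polyX map_polyC a'E.
    by apply: (root_image_over_prime_adjoin (over_prime_adjoin_XnsubXsubC (n i) a'));
      rewrite gE.
  move=> x; apply: iff_trans (T_adj x) _.
  exact: (adjoin_in_subfield (image_subfield iM) IHi lam_image x).
have [c yE] := (T_image m (leqnn m) _).1 (T_phi y).
by exists c; apply: (fmorph_inj phi); rewrite yE phi_j.
Qed.

End LevelClosed.

Theorem corollary6p5 (k K Kbar : fieldType) (iotaK : {rmorphism k -> K})
    (j : {rmorphism K -> Kbar}) (d : nat) :
  (1 <= d)%N -> is_algebraic_closure j -> closed_at_level iotaK j d ->
  perfect K /\ solvably_closed K.
Proof.
move=> d_gt0 Kbar_closure K_closed; split.
- exact: level_closed_perfect d_gt0 Kbar_closure K_closed.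
- exact: level_closed_solvably_closed d_gt0 Kbar_closure K_closed.
Qed.
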